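(* Let $\mathbf c\in\mathbb N^\infty$ with $\|\mathbf c\|\ge2$. Then $$\frac{(|\mathbf c|+\|\mathbf c\|-3)!}{(|\mathbf c|-1)!}\,(\|\mathbf c\|-1)=\frac12\sum_{\substack{\mathbf c=\mathbf a+\mathbf b\\ \mathbf a,\mathbf b\ne0}}\binom{\mathbf c}{\mathbf a,\mathbf b}\frac{(|\mathbf a|+\|\mathbf a\|-2)!\,(|\mathbf b|+\|\mathbf b\|-2)!}{(|\mathbf a|-1)!\,(|\mathbf b|-1)!},$$ the sum running over $\mathbf a,\mathbf b\in\mathbb N^\infty$.
   Context: $\mathbb N^\infty$ is the set of sequences $\mathbf d=(d_1,d_2,\dots)$ of nonnegative integers, almost all zero, with componentwise addition; $|\mathbf d|=\sum_iid_i$, $\|\mathbf d\|=\sum_id_i$, and $\binom{\mathbf c}{\mathbf a,\mathbf b}=\prod_{i\ge1}\frac{c_i!}{a_i!\,b_i!}$. *)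

From mathcomp Require Import all_boot all_order all_algebra.
Set Implicit Arguments. Unset Strict Implicit. Unset Printing Implicit Defensive.
Import Order.TTheory GRing.Theory Num.Theory.

(* An element d of N^infty supported in {1,...,n} is represented by
   d : 'I_n -> nat, with d (i : 'I_n) standing for d_{i+1}. *)

Definition wt n (d : 'I_n -> nat) : nat := (\sum_(i < n) i.+1 * d i)%N.
Definition len n (d : 'I_n -> nat) : nat := (\sum_(i < n) d i)%N.

Definition multinom n (c a b : 'I_n -> nat) : rat :=
  (\prod_(i < n) ((c i)`!%:R / ((a i)`!%:R * (b i)`!%:R)))%R.

(* the largest entry of c: any a with a + b = c has entries bounded by it *)
Definition maxc n (c : 'I_n -> nat) : nat := (\max_(i < n) c i)%N.

Definition bnd n (c : 'I_n -> nat) := {ffun 'I_n -> 'I_(maxc c).+1}.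

Definition natv n m (a : {ffun 'I_n -> 'I_m}) : 'I_n -> nat := fun i => nat_of_ord (a i).

Definition decomp n (c a b : 'I_n -> nat) : bool :=
  [forall i, a i + b i == c i] && [exists i, a i != 0%N] && [exists i, b i != 0%N].

Definition term n (a : 'I_n -> nat) : rat :=
  ((wt a + len a - 2)`!%:R / (wt a - 1)`!%:R)%R.

(* Write w(a) = |a| (|a| + 1) ... (|a| + ||a|| - 2) = (|a| + ||a|| - 2)! / (|a| - 1)! for a <> 0,
   w(0) = 0, and consider the Abel-type sum
     A_c(y) = sum_(a <= c) binom(c; a) w(a) (y - |a|)^(||c|| - ||a||)
   with rising factorials x^(k) = x (x + 1) ... (x + k - 1).  Since
   A_c(y + 1) - A_c(y) = sum_i c_i A_(c - e_i)(y + 1), induction on ||c|| and on j shows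
   A_c(j + 1) = ||c|| (j + 1)^(||c|| - 1) for every natural j; the base case j = 0 says that
   an iterated finite difference of a polynomial of degree ||c|| - 1 vanishes.  The
   difference A_c(|c|) - A_c(|c| - 1) is sum_a binom(c; a) w(a) ||c - a|| w(c - a), and
   adding its image under a |-> c - a gives ||c|| times the convolution of w with itself. *)

From mathcomp Require Import all_boot all_order all_algebra.
From mathcomp Require Import ring zify.
From Stdlib Require Import FunctionalExtensionality.
Import Order.TTheory GRing.Theory Num.Theory.
Set Implicit Arguments. Unset Strict Implicit. Unset Printing Implicit Defensive.
Local Open Scope ring_scope.

Definition rising (x : rat) (k : nat) : rat := \prod_(i < k) (x + i%:R).

Lemma rising0 x : rising x 0 = 1.
Proof. by rewrite /rising big_ord0. Qed.

Lemma risingS x k : rising x k.+1 = rising x k * (x + k%:R).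
Proof. by rewrite /rising big_ord_recr. Qed.

Lemma risingSl x k : rising x k.+1 = x * rising (x + 1) k.
Proof.
rewrite /rising big_ord_recl addr0; congr (_ * _).
apply: eq_bigr => i _; rewrite lift0 -addn1 natrD; ring.
Qed.

Lemma rising_diff x k : rising (x + 1) k - rising x k = k%:R * rising (x + 1) k.-1.
Proof.
case: k => [|k]; first by rewrite !rising0 subrr mul0r.
by rewrite risingS risingSl /= -addn1 natrD; ring.
Qed.

Lemma rising_reflect x p r :
  rising x p * rising (1 - x) r = (-1) ^+ r * rising (x - r%:R) (p + r).
Proof.
elim: r => [|r IH]; first by rewrite rising0 mulr1 expr0 mul1r subr0 addn0.
rewrite risingS mulrA IH addnS risingSl exprS.
have -> : x - r.+1%:R + 1 = x - r%:R by rewrite -addn1 natrD; ring.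
ring.
Qed.

Lemma fact_addn_ratio m k : ((m + k)`!)%:R / (m`!)%:R = rising m.+1%:R k :> rat.
Proof.
apply: (canLR (mulfK _)); first by rewrite pnatr_eq0 -lt0n fact_gt0.
elim: k => [|k IH]; first by rewrite addn0 rising0 mul1r.
by rewrite addnS factS natrM IH risingS -addn1 !natrD; ring.
Qed.

Definition rising_poly (b : rat) (k : nat) : {poly rat} := \prod_(i < k) ('X - (b - i%:R)%:P).

Lemma horner_rising_poly b k v : (rising_poly b k).[v] = rising (v - b) k.
Proof. by rewrite horner_prod; apply: eq_bigr => i _; rewrite hornerXsubC; ring. Qed.

Lemma size_rising_poly b k : size (rising_poly b k) = k.+1.
Proof. by rewrite size_prod_XsubC /index_enum -enumT size_enum_ord. Qed.

Lemma signr_subn (R : pzRingType) (k m : nat) : (k <= m)%N ->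
  (-1) ^+ (m - k) = (-1) ^+ m * (-1) ^+ k :> R.
Proof. by move=> le_km; rewrite -{2}(subnK le_km) exprD -mulrA -expr2 sqrr_sign mulr1. Qed.

Section Vectors.
Variable n : nat.
Implicit Types (a c : 'I_n -> nat) (j : 'I_n).

Definition incv j c : 'I_n -> nat := fun i => if i == j then (c i).+1 else c i.
Definition decv j c : 'I_n -> nat := fun i => if i == j then (c i).-1 else c i.
Definition subv c a : 'I_n -> nat := fun i => (c i - a i)%N.
Definition lev a c : bool := [forall i, a i <= c i]%N.

Lemma incvK j c : decv j (incv j c) = c.
Proof. by apply: functional_extensionality => i; rewrite /incv /decv; case: eqP. Qed.

Lemma decvK j c : (0 < c j)%N -> incv j (decv j c) = c.
Proof.
move=> cj; apply: functional_extensionality => i; rewrite /incv /decv.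
by case: eqP => // ->; rewrite prednK.
Qed.

Lemma leq_decv j c i : (decv j c i <= c i)%N.
Proof. by rewrite /decv; case: eqP => // _; apply: leq_pred. Qed.

Lemma len_incv j c : len (incv j c) = (len c).+1.
Proof.
rewrite /len (bigD1 j) //= [in RHS](bigD1 j) //= /incv eqxx addSn.
by rewrite (eq_bigr c) // => i /negbTE ->.
Qed.

Lemma wt_incv j c : wt (incv j c) = (wt c + j.+1)%N.
Proof.
rewrite /wt (bigD1 j) //= [in RHS](bigD1 j) //= /incv eqxx mulnS.
rewrite (eq_bigr (fun i : 'I_n => i.+1 * c i)%N) => [|i /negbTE -> //].
by rewrite -addnA addnC.
Qed.

Lemma len_decv j c : (0 < c j)%N -> len (decv j c) = (len c).-1.
Proof. by move=> cj; rewrite -{2}(decvK cj) len_incv. Qed.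

Lemma len_subv c a : lev a c -> len (subv c a) = (len c - len a)%N.
Proof.
move/forallP=> le_ac; rewrite -[len c](_ : len (subv c a) + len a = len c)%N ?addnK //.
by rewrite /len -big_split; apply: eq_bigr => i _; rewrite /= subnK.
Qed.

Lemma wt_subv c a : lev a c -> wt (subv c a) = (wt c - wt a)%N.
Proof.
move/forallP=> le_ac; rewrite -[wt c](_ : wt (subv c a) + wt a = wt c)%N ?addnK //.
by rewrite /wt -big_split; apply: eq_bigr => i _; rewrite /= -mulnDr subnK.
Qed.

Lemma lev_len a c : lev a c -> (len a <= len c)%N.
Proof. by move/forallP=> le_ac; apply: leq_sum. Qed.

Lemma lev_wt a c : lev a c -> (wt a <= wt c)%N.
Proof. by move/forallP=> le_ac; apply: leq_sum => i _; rewrite leq_mul2l le_ac orbT. Qed.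

Lemma len_le_wt a : (len a <= wt a)%N.
Proof. by apply: leq_sum => i _; rewrite leq_pmull. Qed.

Lemma len_eq0 a : (len a == 0%N) = [forall i, a i == 0%N].
Proof. by rewrite /len sum_nat_eq0. Qed.

Lemma wt_eq0 a : len a = 0%N -> wt a = 0%N.
Proof.
move/eqP; rewrite len_eq0 => /forallP a0.
by rewrite /wt big1 // => i _; rewrite (eqP (a0 i)) muln0.
Qed.

Lemma exists_neq0 a : [exists i, a i != 0%N] = (len a != 0%N).
Proof. by rewrite len_eq0 negb_forall. Qed.
End Vectors.

(* [weight a] is [(|a| + ||a|| - 2)! / (|a| - 1)!] for [a != 0]. *)
Definition weight n (a : 'I_n -> nat) : rat :=
  if len a == 0%N then 0 else rising (wt a)%:R (len a).-1.

Lemma weight_diff n (b : 'I_n -> nat) :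
  rising (wt b)%:R (len b) - rising ((wt b)%:R - 1) (len b) = (len b)%:R * weight b.
Proof.
have := rising_diff ((wt b)%:R - 1) (len b); rewrite subrK => ->.
by rewrite /weight; case: eqP => [->|]; rewrite ?mul0r.
Qed.

Section BinomialSums.
Variables n N : nat.
Implicit Types (a c : 'I_n -> nat) (F G : ('I_n -> nat) -> rat).

Definition binv c a : rat := \prod_(i < n) ('C(c i, a i))%:R.

(* For [c] bounded by [N], [bsum c F] is the sum of [binv c a * F a] over all [a <= c]:
   the index type also contains vectors not below [c], but [binv] vanishes on them. *)
Definition bsum c F : rat :=
  \sum_(a : {ffun 'I_n -> 'I_N.+1}) binv c (natv a) * F (natv a).

Lemma binv_eq0 c a : ~~ lev a c -> binv c a = 0.
Proof.
by case/forallPn=> i; rewrite -ltnNge => lt_ci; rewrite /binv (bigD1 i) //= bin_small ?mul0r.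
Qed.

Lemma eq_bsum c F G : (forall a, lev a c -> F a = G a) -> bsum c F = bsum c G.
Proof.
move=> eqFG; apply: eq_bigr => a _.
by case: (boolP (lev (natv a) c)) => [/eqFG -> | /binv_eq0 ->]; rewrite ?mul0r.
Qed.

Lemma bsumD c F G : bsum c (fun a => F a + G a) = bsum c F + bsum c G.
Proof. by rewrite /bsum -big_split; apply: eq_bigr => a _; rewrite mulrDr. Qed.

Lemma bsumB c F G : bsum c (fun a => F a - G a) = bsum c F - bsum c G.
Proof. by rewrite /bsum -sumrB; apply: eq_bigr => a _; rewrite mulrBr. Qed.

Lemma bsumZ c k F : bsum c (fun a => k * F a) = k * bsum c F.
Proof. by rewrite /bsum mulr_sumr; apply: eq_bigr => a _; rewrite mulrCA. Qed.

Lemma bsum_sum c (F : 'I_n -> ('I_n -> nat) -> rat) :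
  bsum c (fun a => \sum_(i < n) F i a) = \sum_(i < n) bsum c (F i).
Proof. by rewrite /bsum exchange_big; apply: eq_bigr => a _; rewrite mulr_sumr. Qed.

Lemma bsum_len_eq0 c : bsum c (fun a => (len a == 0%N)%:R) = 1.
Proof.
pose z : {ffun 'I_n -> 'I_N.+1} := [ffun => ord0].
have natv_z : natv z = fun=> 0%N by apply: functional_extensionality => i; rewrite /natv ffunE.
rewrite /bsum (bigD1 z) //= big1 => [|a a_neq_z].
  rewrite natv_z addr0 /binv big1 => [|i _]; last by rewrite bin0.
  by rewrite mul1r /len big1.
case: eqP => [|_]; last by rewrite mulr0.
move/eqP; rewrite len_eq0 => /forallP a0; case/eqP: a_neq_z.
by apply/ffunP => i; apply/val_inj; rewrite ffunE; apply/eqP/a0.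
Qed.

Lemma binv_incv j c a :
  binv (incv j c) a = binv c a + (0 < a j)%N%:R * binv c (decv j a).
Proof.
rewrite /binv (bigD1 j) //= [X in _ = X + _](bigD1 j) //= [X in _ = _ + _ * X](bigD1 j) //=.
rewrite (eq_bigr (fun i => ('C(c i, a i))%:R)) => [|i /negbTE ji]; last first.
  by rewrite /incv ji.
rewrite [X in _ = _ + _ * (_ * X)](eq_bigr (fun i => ('C(c i, a i))%:R)) => [|i /negbTE ji];
  last by rewrite /decv ji.
rewrite /incv /decv eqxx; case: (a j) => [|k] /=; first by rewrite !bin0 mul0r addr0.
by rewrite binS natrD mul1r mulrDl addrC.
Qed.

Definition shift_at j (a : {ffun 'I_n -> 'I_N.+1}) : {ffun 'I_n -> 'I_N.+1} :=
  [ffun i => if i == j then ordS (a i) else a i].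

Lemma shift_at_inj j : injective (shift_at j).
Proof.
move=> a b /ffunP eq_ab; apply/ffunP => i; have := eq_ab i; rewrite !ffunE.
by case: eqP => _ //; apply: ordS_inj.
Qed.

Lemma bsum_incv j c F : (forall i, incv j c i <= N)%N ->
  bsum (incv j c) F = bsum c F + bsum c (fun a => F (incv j a)).
Proof.
move=> le_cN; rewrite /bsum.
rewrite (eq_bigr (fun f => binv c (natv f) * F (natv f) +
   (0 < natv f j)%N%:R * binv c (decv j (natv f)) * F (natv f))) => [|f _]; last first.
  by rewrite binv_incv mulrDl.
rewrite big_split; congr (_ + _).
rewrite (reindex_inj (@shift_at_inj j)) /=; apply: eq_bigr => f _.
have [lt_fN | le_Nf] := ltnP (f j) N.
  have -> : natv (shift_at j f) = incv j (natv f).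
    apply: functional_extensionality => i; rewrite /natv /incv ffunE.
    by case: eqP => [->|] //=; rewrite modn_small.
  by rewrite incvK /incv eqxx mul1r.
(* [ordS] wraps [N] around to [0], but there [binv c] vanishes since [c j < N]. *)
have fj : nat_of_ord (f j) = N by apply/eqP; rewrite eqn_leq le_Nf -ltnS ltn_ord.
have lt_cN : (c j < N)%N by have := le_cN j; rewrite /incv eqxx.
rewrite /natv ffunE eqxx /= fj modnn mul0r mul0r.
by rewrite /binv (bigD1 j) //= fj bin_small // !mul0r.
Qed.

Lemma binv_decv i c a : binv c a * (c i - a i)%:R = (c i)%:R * binv (decv i c) a.
Proof.
rewrite /binv (bigD1 i) //= [X in _ = _ * X](bigD1 i) //=.
rewrite [X in _ = _ * (_ * X)](eq_bigr (fun l => ('C(c l, a l))%:R)) => [|l /negbTE il]; last first.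
  by rewrite /decv il.
have := congr1 (fun x => x%:R : rat) (mul_bin_down (c i) (a i)).
by rewrite /decv eqxx !natrM mulrA => ->; ring.
Qed.

Lemma bsum_decv i c F :
  bsum c (fun a => (c i - a i)%:R * F a) = (c i)%:R * bsum (decv i c) F.
Proof.
by rewrite /bsum mulr_sumr; apply: eq_bigr => a _; rewrite mulrA binv_decv mulrA.
Qed.
End BinomialSums.

Section Complement.
Variables (n N : nat) (c : 'I_n -> nat).
Hypothesis le_cN : forall i, (c i <= N)%N.

(* Off [f i <= c i] the map is the identity, which keeps it an involution. *)
Definition compl (f : {ffun 'I_n -> 'I_N.+1}) : {ffun 'I_n -> 'I_N.+1} :=
  [ffun i => if (f i <= c i)%N then inord (c i - f i) else f i].

Lemma complE f i : compl f i = (if f i <= c i then c i - f i else f i)%N :> nat.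
Proof.
rewrite ffunE; case: ifP => // _.
by rewrite inordK // ltnS (leq_trans (leq_subr _ _) (le_cN i)).
Qed.

Lemma complK : involutive compl.
Proof.
move=> f; apply/ffunP => i; apply: val_inj => /=; rewrite !complE.
by case le_fc: (f i <= c i)%N; rewrite ?le_fc // leq_subr subKn.
Qed.

Lemma natv_compl f : lev (natv f) c -> natv (compl f) = subv c (natv f).
Proof.
move/forallP=> le_fc; apply: functional_extensionality => i.
by rewrite /natv /subv complE le_fc.
Qed.

Lemma bsum_subv_sym (G : ('I_n -> nat) -> ('I_n -> nat) -> rat) :
  bsum N c (fun a => G a (subv c a)) = bsum N c (fun a => G (subv c a) a).
Proof.
rewrite /bsum (reindex_inj (can_inj complK)); apply: eq_bigr => f _.
have [le_fc | nle_fc] := boolP (lev (natv f) c); last first.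
  have nle_cf : ~~ lev (natv (compl f)) c.
    apply: contra nle_fc => /forallP le_cf; apply/forallP => i.
    by have := le_cf i; rewrite /natv complE; case: ifP => // ->.
  by rewrite !binv_eq0 // !mul0r.
have subvK : subv c (subv c (natv f)) = natv f.
  by apply: functional_extensionality => i; rewrite /subv subKn //; move/forallP: le_fc.
rewrite natv_compl // subvK; congr (_ * _).
by apply: eq_bigr => i _; rewrite /subv bin_sub //; move/forallP: le_fc.
Qed.
End Complement.

Lemma size_sub_comp_XaddC (R : idomainType) (p : {poly R}) (u : R) :
  (size (p - (p \Po ('X + u%:P)))%R <= (size p).-1)%N.
Proof.
have size_shift : size ('X + u%:P) = 2%N by rewrite size_XaddC.
have size_comp : size (p \Po ('X + u%:P)) = size p by rewrite size_comp_poly2.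
have lead_comp : lead_coef (p \Po ('X + u%:P)) = lead_coef p.
  by rewrite lead_coef_comp ?size_shift // lead_coefXaddC expr1n mulr1.
apply/leq_sizeP => i le_pi; rewrite coefB.
have [lt_ip | le_pi'] := ltnP i (size p); last by rewrite !nth_default ?subrr ?size_comp.
have -> : i = (size p).-1 by apply/eqP; rewrite eqn_leq le_pi -ltnS (leq_trans lt_ip) ?leqSpred.
by move: lead_comp; rewrite /lead_coef size_comp => ->; rewrite subrr.
Qed.

Section AbelIdentity.
Variables n N : nat.
Implicit Types (a c : 'I_n -> nat).

(* Removing a unit from [c] turns the sum into a difference of step [j.+2], which lowers the
   degree of [p]. *)
Lemma bsum_poly_eq0 c (p : {poly rat}) : (forall i, c i <= N)%N -> (size p <= len c)%N ->
  bsum N c (fun a => (-1) ^+ len a * p.[(wt a + len a)%:R]) = 0.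
Proof.
move Kc: (len c) => K; elim: K c Kc p => [|K IH] c Kc p le_cN size_p.
  move: size_p; rewrite leqn0 size_poly_eq0 => /eqP->.
  by rewrite /bsum big1 // => f _; rewrite horner0 !mulr0.
have [j cj] : exists j, (0 < c j)%N.
  have : [exists i, c i != 0%N] by rewrite exists_neq0 Kc.
  by case/existsP => j; rewrite -lt0n; exists j.
pose u : rat := j.+2%:R.
rewrite -(decvK cj) bsum_incv ?decvK // -bsumD.
rewrite (@eq_bsum _ _ _ _
    (fun a => (-1) ^+ len a * (p - (p \Po ('X + u%:P))).[(wt a + len a)%:R])) => [|a _];
  last first.
  rewrite len_incv wt_incv hornerD hornerN horner_comp hornerD hornerX hornerC exprS /u -natrD.
  by rewrite (_ : wt a + j.+1 + (len a).+1 = wt a + len a + j.+2)%N; [ring | lia].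
apply: IH.
- by rewrite len_decv // Kc.
- by move=> i; apply: leq_trans (leq_decv _ _ _) (le_cN i).
- by apply: leq_trans (size_sub_comp_XaddC p u) _; rewrite -subn1 leq_subLR add1n.
Qed.

Definition abel_sum c (y : rat) : rat :=
  bsum N c (fun a => weight a * rising (y - (wt a)%:R) (len c - len a)).

Lemma abel_sum_len0 c y : len c = 0%N -> abel_sum c y = 0.
Proof.
move=> c0; rewrite /abel_sum (@eq_bsum _ _ _ _ (fun=> 0)) => [|a /lev_len].
  by rewrite /bsum big1 // => f _; rewrite mulr0.
by rewrite c0 leqn0 /weight => ->; rewrite mul0r.
Qed.

Lemma abel_sum_base c K : len c = K.+1 -> (forall i, c i <= N)%N ->
  abel_sum c 1 = K.+1%:R * rising 1 K.
Proof.
move=> Kc le_cN.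
(* For [a != 0] the summand is [q] at [|a| + ||a||] up to the sign [(-1) ^+ (K.+1 + len a)];
   the [len a == 0] term accounts for [a = 0]. *)
pose q := rising_poly K.+1%:R K.
have size_q : (size q <= len c)%N by rewrite size_rising_poly Kc.
rewrite /abel_sum (@eq_bsum _ _ _ _ (fun a => (-1) ^+ K.+1 *
    ((-1) ^+ len a * q.[(wt a + len a)%:R] - q.[0] * (len a == 0%N)%:R))) => [|a le_ac].
  rewrite bsumZ bsumB bsumZ bsum_poly_eq0 // bsum_len_eq0 mulr1 add0r horner_rising_poly add0r.
  have two : rising (1 + 1) K = K.+1%:R * rising 1 K.
    by have := risingS 1 K; rewrite risingSl mul1r => ->; rewrite -natr1; ring.
  have := rising_reflect (-1) 0 K; rewrite rising0 mul1r add0n opprK two => ->.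
  by rewrite -natr1 exprS (_ : - (K%:R + 1) = -1 - K%:R :> rat); ring.
rewrite /weight !horner_rising_poly; case ka: (len a) => [|k] /=.
  by rewrite wt_eq0 // mul0r expr0 mul1r mulr1 addn0 subrr mulr0.
have le_kK : (k <= K)%N by rewrite -ltnS -ka -Kc lev_len.
rewrite Kc subSS rising_reflect subnKC // mulr0 subr0.
have -> : (wt a + k.+1)%:R - K.+1%:R = (wt a)%:R - (K - k)%:R :> rat.
  by rewrite natrB // natrD -(addn1 k) -(addn1 K) !natrD; ring.
by rewrite signr_subn // !exprS; ring.
Qed.

Lemma abel_sumS c y :
  abel_sum c (y + 1) = abel_sum c y + \sum_(i < n) (c i)%:R * abel_sum (decv i c) (y + 1).
Proof.
rewrite /abel_sum (@eq_bsum _ _ _ _ (fun a =>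
    weight a * rising (y - (wt a)%:R) (len c - len a) + \sum_(i < n)
      (c i - a i)%:R * (weight a * rising (y + 1 - (wt a)%:R) ((len c).-1 - len a))))
  => [|a le_ac]; last first.
  rewrite -mulr_suml -natr_sum (_ : \sum_i (c i - a i) = len c - len a)%N; last exact: len_subv.
  rewrite (_ : (len c).-1 - len a = (len c - len a).-1)%N; last by rewrite -!subn1 subnAC.
  have := rising_diff (y - (wt a)%:R) (len c - len a).
  rewrite (_ : y - _ + 1 = y + 1 - (wt a)%:R) => [diff|]; last by ring.
  by rewrite mulrCA -diff; ring.
rewrite bsumD bsum_sum; congr (_ + _); apply: eq_bigr => i _.
rewrite bsum_decv; case: (posnP (c i)) => [-> | ci]; first by rewrite !mul0r.
by rewrite len_decv.
Qed.

Lemma abel_sum_nat c j : (forall i, c i <= N)%N ->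
  abel_sum c j.+1%:R = (len c)%:R * rising j.+1%:R (len c).-1.
Proof.
move Kc: (len c) => K; elim: K c Kc j => [|K IHK] c Kc j le_cN.
  by rewrite abel_sum_len0 // mul0r.
elim: j => [|j IHj]; first exact: abel_sum_base.
have natS : j.+2%:R = j.+1%:R + 1 :> rat by rewrite -natr1.
rewrite {1}natS abel_sumS IHj.
rewrite (eq_bigr (fun i => (c i)%:R * (K%:R * rising j.+2%:R K.-1))) => [|i _]; last first.
  case: (posnP (c i)) => [-> | ci]; first by rewrite !mul0r.
  rewrite -natS IHK //; first by rewrite len_decv // Kc.
  by move=> l; apply: leq_trans (leq_decv _ _ _) (le_cN l).
rewrite -mulr_suml -natr_sum -/(len c) Kc /=.
by have := rising_diff j.+1%:R K; rewrite -natS => <-; ring.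
Qed.
End AbelIdentity.

Lemma bsum_weight_conv n N (c : 'I_n -> nat) : (2 <= len c)%N -> (forall i, c i <= N)%N ->
  bsum N c (fun a => weight a * weight (subv c a))
  = 2 * (len c).-1%:R * rising (wt c)%:R (len c).-2.
Proof.
move=> len_c2 le_cN.
have [j wc] : exists j, wt c = j.+2.
  by exists (wt c - 2)%N; rewrite -addn2 subnK // (leq_trans len_c2 (len_le_wt c)).
set K := len c; rewrite wc.
have natS : j.+2%:R = j.+1%:R + 1 :> rat by rewrite -natr1.
have abel_diff :
    abel_sum N c j.+2%:R - abel_sum N c j.+1%:R = K%:R * (K.-1%:R * rising j.+2%:R K.-2).
  by rewrite !abel_sum_nat // -mulrBr natS rising_diff.
have lhs : abel_sum N c j.+2%:R - abel_sum N c j.+1%:R =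
    bsum N c (fun a => weight a * ((len (subv c a))%:R * weight (subv c a))).
  rewrite /abel_sum -bsumB; apply: eq_bsum => a le_ac.
  rewrite -mulrBr -weight_diff wt_subv // len_subv // natrB ?lev_wt // wc natS.
  by congr (_ * (_ - rising _ _)); ring.
have sym := bsum_subv_sym le_cN (fun x y => weight x * ((len y)%:R * weight y)).
have K0 : K%:R != 0 :> rat by rewrite pnatr_eq0 -lt0n (leq_trans _ len_c2).
apply: (mulfI K0); rewrite -bsumZ.
rewrite (@eq_bsum _ _ _ _ (fun a => weight a * ((len (subv c a))%:R * weight (subv c a)) +
    weight (subv c a) * ((len a)%:R * weight a))) => [|a le_ac]; last first.
  by rewrite -[K](subnK (lev_len le_ac)) -len_subv // natrD; ring.
by rewrite bsumD -sym -lhs abel_diff; ring.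
Qed.

Lemma term_weight n (a : 'I_n -> nat) : len a != 0%N -> term a = weight a.
Proof.
move=> a0; have wa : (0 < wt a)%N by rewrite (leq_trans _ (len_le_wt a)) // lt0n.
rewrite /term /weight (negbTE a0) (_ : wt a + len a - 2 = (wt a).-1 + (len a).-1)%N.
  by rewrite subn1 fact_addn_ratio prednK.
by rewrite -!subn1; move: a0; rewrite -lt0n; lia.
Qed.

Lemma multinom_binv n (c a : 'I_n -> nat) : lev a c -> multinom c a (subv c a) = binv c a.
Proof.
move/forallP=> le_ac; rewrite /multinom /binv; apply: eq_bigr => i _.
by rewrite /subv -(bin_fact (le_ac i)) !natrM mulfK // mulf_neq0 // pnatr_eq0 -lt0n fact_gt0.
Qed.

Lemma natv_inj n m : injective (@natv n m).
Proof. by move=> f g fg; apply/ffunP => i; apply: val_inj; have := congr1 (@^~ i) fg. Qed.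

Section Decompositions.
Variables (n : nat) (c : 'I_n -> nat).

Lemma le_maxc i : (c i <= maxc c)%N.
Proof. exact: leq_bigmax. Qed.

Lemma decompE (f g : bnd c) :
  decomp c (natv f) (natv g) = (g == compl c f) &&
    [&& lev (natv f) c, len (natv f) != 0%N & len (subv c (natv f)) != 0%N].
Proof.
apply/idP/idP => [/andP [/andP [/forallP sum_fg f0] g0] |
                  /andP [/eqP -> /and3P [le_fc f0 cf0]]].
  have le_fc : lev (natv f) c by apply/forallP => i; rewrite -(eqP (sum_fg i)) leq_addr.
  have gE : natv g = subv c (natv f).
    by apply: functional_extensionality => i; rewrite /subv -(eqP (sum_fg i)) addKn.
  have -> : g = compl c f by apply: natv_inj; rewrite (natv_compl le_maxc).
  by rewrite eqxx le_fc -gE -!exists_neq0 f0 g0.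
rewrite /decomp !exists_neq0 (natv_compl le_maxc) // f0 cf0 !andbT.
by apply/forallP => i; rewrite /subv subnKC //; move/forallP: le_fc.
Qed.

Lemma sum_decomp (f : bnd c) :
  \sum_(g : bnd c | decomp c (natv f) (natv g))
     multinom c (natv f) (natv g) * term (natv f) * term (natv g)
  = binv c (natv f) * (weight (natv f) * weight (subv c (natv f))).
Proof.
under eq_bigl do rewrite decompE.
case: (boolP [&& _, _ & _]) => [/and3P [le_fc f0 cf0] | degenerate].
  under eq_bigl do rewrite andbT.
  by rewrite big_pred1_eq (natv_compl le_maxc) // multinom_binv // !term_weight // mulrA.
under eq_bigl do rewrite andbF.
rewrite big_pred0_eq.
have [le_fc | /binv_eq0 ->] := boolP (lev (natv f) c); last by rewrite mul0r.
move: degenerate; rewrite le_fc /weight /=.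
by case: eqP => [_ _|_]; [rewrite mul0r mulr0 | case: eqP => // _ _; rewrite !mulr0].
Qed.
End Decompositions.

Theorem propositionA2 (n : nat) (c : 'I_n -> nat) (hc : (2 <= len c)%N) :
  ((wt c + len c - 3)`!%:R / (wt c - 1)`!%:R * (len c - 1)%:R : rat)
  = 1 / 2 * \sum_(p : bnd c * bnd c | decomp c (natv p.1) (natv p.2))
        multinom c (natv p.1) (natv p.2) * term (natv p.1) * term (natv p.2).
Proof.
have wc : (0 < wt c)%N by rewrite (leq_trans _ (len_le_wt c)) // ltnW.
rewrite -(pair_big_dep xpredT (fun f g => decomp c (natv f) (natv g))
   (fun f g => multinom c (natv f) (natv g) * term (natv f) * term (natv g))) /=.
rewrite (eq_bigr _ (fun f _ => sum_decomp f)).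
rewrite -/(bsum _ c (fun a => weight a * weight (subv c a))).
rewrite (bsum_weight_conv hc (@le_maxc _ c)).
rewrite (_ : wt c + len c - 3 = (wt c).-1 + (len c).-2)%N; last by rewrite -!subn1; lia.
by rewrite subn1 fact_addn_ratio prednK // subn1; field.
Qed.
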